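(* Let $V=\{v_0,\dots,v_{L-1}\}$ be a set of $L\ge1$ boolean variables and let $n_0,\dots,n_t$ ($t\ge1$) be a sequence of nodes, node $n_j$ carrying a state $s_j:V\to\{0,1\}$. Let $n^c=n_t$ (child) with state $s^c=s_t$ and $n^p=n_k$ (parent) for some $k\in\{0,\dots,t-1\}$, and suppose the states of $n^p$ and $n^c$ differ in exactly $e$ variables. For a node $n=n_m$ in the sequence define $\alpha_{0:t}(n)=\frac{1}{t}\sum_{i\in\{0,\dots,t\},i\ne m}\delta(n,n_i)$ with $\delta(n_m,n_i)=\frac1L\sum_{l=0}^{L-1}\mathbf{1}_{s_m(v_l)\neq s_i(v_l)}$. Let $\mu_{t-1}^{min}(n^c)=\min_{0\le l\le L-1}\frac{1}{t}|\{j\in\{0,\dots,t-1\}\mid s_j(v_l)=s^c(v_l)\}|$. If $\mu_{t-1}^{min}(n^c)=0$, then $$\alpha_{0:t}(n^c)\ge\alpha_{0:t}(n^p)-\frac{t-1}{t}\,\frac{e-2}{L}.$$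
   Context: $\delta$ is the normalized Hamming distance between node states; $\alpha_{0:t}(n)$ is the average normalized Hamming distance of a node of the sequence to all other nodes. The hypothesis $\mu_{t-1}^{min}(n^c)=0$ means that some variable takes in the child's state a value never observed among the states of $n_0,\dots,n_{t-1}$. *)

From mathcomp Require Import all_boot all_order all_algebra.
Set Implicit Arguments. Unset Strict Implicit. Unset Printing Implicit Defensive.
Import Order.TTheory GRing.Theory Num.Theory.
Local Open Scope ring_scope.

(* Nodes n_0..n_t are indexed by 'I_t.+1; variables v_0..v_{L-1} by 'I_L.
   s j l is the value s_j(v_l). *)

Definition delta (R : realFieldType) (L t : nat) (s : 'I_t.+1 -> 'I_L -> bool)
  (m i : 'I_t.+1) : R :=
  (\sum_(l < L) ((s m l != s i l) : nat)%:R) / L%:R.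

Definition alpha (R : realFieldType) (L t : nat) (s : 'I_t.+1 -> 'I_L -> bool)
  (m : 'I_t.+1) : R :=
  (\sum_(i < t.+1 | i != m) delta R s m i) / t%:R.

Definition agree_count (L t : nat) (s : 'I_t.+1 -> 'I_L -> bool) (l : 'I_L) : nat :=
  #|[pred j : 'I_t.+1 | (j < t)%N && (s j l == s ord_max l)]|.

(* mu^{min}_{t-1}(n^c) = min_l (1/t) |{...}|; the seed t is harmless since
   every count is <= t (and L >= 1 in the theorem). *)
Definition mu_min (R : realFieldType) (L t : nat) (s : 'I_t.+1 -> 'I_L -> bool) : R :=
  (\big[minn/t]_(l < L) agree_count s l)%:R / t%:R.

From mathcomp Require Import all_boot all_order all_algebra.
From mathcomp Require Import lra.
Set Implicit Arguments. Unset Strict Implicit. Unset Printing Implicit Defensive.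
Import Order.TTheory GRing.Theory Num.Theory.
Local Open Scope ring_scope.

(* Since mu_min vanishes, some variable v takes at the child a value seen at
   no earlier node; variables being boolean, all earlier nodes then agree on
   v.  For each of the t - 1 nodes n_i other than n^p and n^c, the Hamming
   triangle inequality d(n^p, n_i) <= d(n^p, n^c) + d(n^c, n_i) is therefore
   off by 2 on v, giving delta(n^p, n_i) - delta(n^c, n_i) <= (e - 2) / L.
   Summing bounds alpha(n^p) - alpha(n^c); the terms for n^p and n^c cancel
   since delta is symmetric. *)

Lemma bigmin_eq0 (I : finType) (P : pred I) (f : I -> nat) (n : nat) :
  (0 < n)%N -> \big[minn/n]_(i | P i) f i = 0%N -> exists i, f i = 0%N.
Proof.
move=> n_gt0 min_eq0; case: (pickP (fun i => f i == 0%N)) => [i /eqP|f_neq0].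
  by exists i.
suff : (0 < \big[minn/n]_(i | P i) f i)%N by rewrite min_eq0.
apply: (big_ind (fun m => 0 < m)%N) => // [x y|i _]; first by rewrite leq_min => -> ->.
by rewrite lt0n f_neq0.
Qed.

Section Hamming.

Variables (I : finType) (T : eqType).

Definition hamming (u v : I -> T) : nat := (\sum_i (u i != v i))%N.

Lemma hammingC (u v : I -> T) : hamming u v = hamming v u.
Proof. by apply: eq_bigr => i _; rewrite eq_sym. Qed.

Lemma hamming_card (u v : I -> T) : hamming u v = #|[pred i | u i != v i]|.
Proof.
rewrite -sum1_card big_mkcond /=.
by apply: eq_bigr => i _; rewrite inE; case: (_ != _).
Qed.

Lemma neq_triangle (x y z : T) : ((x != z) <= (x != y) + (y != z))%N.
Proof. by case: (eqVneq x y) => [->|_] //; case: (x != z). Qed.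

Lemma hamming_triangle_gap (u v w : I -> T) (i0 : I) :
  u i0 = w i0 -> u i0 != v i0 ->
  (hamming u w + 2 <= hamming u v + hamming v w)%N.
Proof.
move=> uw_i0 uv_i0; rewrite /hamming -big_split /= (bigD1 i0) //=.
rewrite [X in (_ <= X)%N](bigD1 i0) //= -uw_i0 eqxx (negPf uv_i0) eq_sym (negPf uv_i0).
rewrite add0n addnC leq_add2l.
by apply: leq_sum => i _; apply: neq_triangle.
Qed.

End Hamming.

Section Alpha.

Variables (R : realFieldType) (L t : nat) (s : 'I_t.+1 -> 'I_L -> bool).

Lemma delta_hamming (m i : 'I_t.+1) :
  delta R s m i = (hamming (s m) (s i))%:R / L%:R.
Proof. by rewrite /delta /hamming natr_sum. Qed.

Lemma deltaC (m i : 'I_t.+1) : delta R s m i = delta R s i m.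
Proof. by rewrite !delta_hamming hammingC. Qed.

Lemma delta_self (m : 'I_t.+1) : delta R s m m = 0.
Proof. by rewrite /delta big1 ?mul0r // => l _; rewrite eqxx. Qed.

Lemma alphaE (m : 'I_t.+1) : alpha R s m = (\sum_i delta R s m i) / t%:R.
Proof. by rewrite /alpha [in RHS](bigD1 m) //= delta_self add0r. Qed.

Lemma alphaB (m n : 'I_t.+1) :
  alpha R s m - alpha R s n =
  (\sum_(i | (i != m) && (i != n)) (delta R s m i - delta R s n i)) / t%:R.
Proof.
rewrite !alphaE -mulrBl -sumrB; congr (_ / _).
case: (eqVneq m n) => [<-|mn].
  by rewrite !big1 // => i _; rewrite subrr.
rewrite (bigD1 m) //= (bigD1 n) 1?eq_sym //= !delta_self (deltaC n m).
by rewrite sub0r subr0 addrA addNr add0r.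
Qed.

Lemma deltaB_le_gap (m n i : 'I_t.+1) (l : 'I_L) :
  s m l = s i l -> s m l != s n l ->
  delta R s m i - delta R s n i <= ((hamming (s m) (s n))%:R - 2) / L%:R.
Proof.
move=> mi_l mn_l; have := hamming_triangle_gap mi_l mn_l.
rewrite -(ler_nat R) !natrD => triangle.
rewrite !delta_hamming -mulrBl; apply: ler_wpM2r; first by rewrite invr_ge0 ler0n.
lra.
Qed.

Lemma mu_min_eq0_fresh_value :
  (0 < t)%N -> mu_min R s = 0 ->
  exists l, forall j : 'I_t.+1, (j < t)%N -> s j l != s ord_max l.
Proof.
move=> t_gt0 mu0.
have t_neq0 : (t%:R : R) != 0 by rewrite pnatr_eq0 -lt0n.
have min_eq0 : \big[minn/t]_(l < L) agree_count s l = 0%N.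
  apply/eqP; rewrite -(pnatr_eq0 R).
  by move: mu0; rewrite /mu_min => /eqP; rewrite mulf_eq0 invr_eq0 (negPf t_neq0) orbF.
have [l /card0_eq no_agree] := bigmin_eq0 t_gt0 min_eq0.
exists l => j j_lt_t; apply/negP => agree.
by have := no_agree j; rewrite !inE j_lt_t agree.
Qed.

End Alpha.

Lemma card_ord_neq2 (n : nat) (a b : 'I_n) :
  a != b -> #|[pred i | (i != a) && (i != b)]| = (n - 2)%N.
Proof.
move=> ab; rewrite -[in RHS](card_ord n) -(cardC (pred2 a b)) card2 ab addKn.
by apply: eq_card => i; rewrite !inE negb_or.
Qed.

Theorem theorem6 (R : realFieldType) (L t : nat)
  (s : 'I_t.+1 -> 'I_L -> bool) (k : 'I_t.+1) (e : nat) :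
  (0 < L)%N -> (0 < t)%N -> (k < t)%N ->
  #|[pred l : 'I_L | s k l != s ord_max l]| = e ->
  mu_min R s = 0 ->
  alpha R s ord_max >= alpha R s k - (t%:R - 1) / t%:R * ((e%:R - 2) / L%:R).
Proof.
move=> _ t_gt0 k_lt_t k_max_e mu0.
have [l fresh] := mu_min_eq0_fresh_value t_gt0 mu0.
have k_neq_max : k != ord_max by rewrite -val_eqE /= neq_ltn k_lt_t.
have hamming_k_max : hamming (s k) (s ord_max) = e by rewrite hamming_card.
set c : R := (e%:R - 2) / L%:R.
have gap i : (i != k) && (i != ord_max) -> delta R s k i - delta R s ord_max i <= c.
  case/andP=> _ i_neq_max.
  have i_lt_t : (i < t)%N.
    by rewrite ltn_neqAle -ltnS ltn_ord andbT; move: i_neq_max; rewrite -val_eqE.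
  have k_i_agree : s k l = s i l.
    by move: (fresh k k_lt_t) (fresh i i_lt_t); case: (s k l) (s i l) (s ord_max l) => [] [] [].
  by rewrite /c -hamming_k_max; apply: deltaB_le_gap k_i_agree (fresh k k_lt_t).
have sum_gap : alpha R s k - alpha R s ord_max <= (t%:R - 1) / t%:R * c.
  rewrite alphaB mulrAC; apply: ler_wpM2r; first by rewrite invr_ge0 ler0n.
  apply: le_trans (ler_sum _ gap) _.
  by rewrite sumr_const card_ord_neq2 // subSS -[c *+ _]mulr_natr natrB // mulrC.
by rewrite lerBlDr -lerBlDl.
Qed.
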